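(* The axiom system $\mathbf{AX}^{prob}=\{\mathrm{Taut},\mathrm{MP},\mathrm{Ineq},E1,E2,E3,E4,E5\}$ is sound and complete for $\mathcal{L}^E$ with respect to $\mathcal{M}^{prob}$: a formula of $\mathcal{L}^E$ is provable in $\mathbf{AX}^{prob}$ iff it is true in every probability structure.
   Context: Language $\mathcal L^E$: fix primitive propositions $\Phi_0$; propositional formulas built with $\neg,\wedge$; $\mathit{true}$ a tautology, $\mathit{false}=\neg\mathit{true}$. A propositional gamble is $b_1\phi_1+\cdots+b_n\phi_n$ (integers $b_i$); sums and integer multiples are formed termwise, $\phi$ identified with $1\phi$. Formulas are Boolean combinations of expectation inequalities $a_1e(\gamma_1)+\cdots+a_ke(\gamma_k)\ge b$ (integers $a_i,b$); $t\le b$ abbreviates $-t\ge-b$, $t>b$ abbreviates $\neg(t\le b)$, $t=b$ abbreviates $t\ge b\wedge t\le b$, $t_1\ge t_2$ abbreviates $t_1-t_2\ge0$. A probability structure is $M=(W,\mathcal F,\mu,\pi)$: $W$ a nonempty set, $\mathcal F$ an algebra on $W$, $\mu$ a probability measure on $\mathcal F$, $\pi$ a truth assignment to $\Phi_0$ at each world with every $\{w:\pi(w)(p)=\text{true}\}\in\mathcal F$; $[\![\phi]\!]_M$ is the set of worlds satisfying $\phi$, $[\![\sum b_i\phi_i]\!]_M=\sum b_iX_{[\![\phi_i]\!]_M}$, and $M\models\sum a_ie(\gamma_i)\ge b$ iff $\sum a_iE_\mu([\![\gamma_i]\!]_M)\ge b$ ($E_\mu$ ordinary expectation); Boolean connectives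 classical. $\mathcal M^{prob}$ is the class of probability structures. Axioms: Taut: all instances in $\mathcal L^E$ of propositional tautologies. MP: from $f$ and $f\Rightarrow g$ infer $g$. Ineq: all instances of valid formulas about linear inequalities, i.e. Boolean combinations of inequalities $c_1x_1+\cdots+c_nx_n\ge c$ true under every assignment of reals to the variables, with each variable $x_i$ uniformly replaced by a term $e(\gamma_i)$. E1: $e(\gamma_1+\gamma_2)=e(\gamma_1)+e(\gamma_2)$. E2: $e(a\phi)=ae(\phi)$ for integers $a$. E3: $e(\mathit{false})=0$. E4: $e(\mathit{true})=1$. E5: $e(\gamma_1)\le e(\gamma_2)$ whenever $\gamma_1\le\gamma_2$ is a valid gamble inequality, i.e. $[\![\gamma_1]\!]_M(w)\le[\![\gamma_2]\!]_M(w)$ for every nonempty set of worlds with truth assignment and every world $w$. *)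

From Stdlib Require Import Reals ZArith List.
Import ListNotations.
Open Scope R_scope.
Set Implicit Arguments.

Section Logic.
Variable P : Type.
Variable p0 : P.     (* a fixed primitive proposition, used to build the tautology `true` *)

Inductive pform : Type :=
| PVar : P -> pform
| PNot : pform -> pform
| PAnd : pform -> pform -> pform.

Definition ptrue : pform := PNot (PAnd (PVar p0) (PNot (PVar p0))).
Definition pfalse : pform := PNot ptrue.

Fixpoint psat (v : P -> bool) (phi : pform) : bool :=
  match phi with
  | PVar p => v p
  | PNot a => negb (psat v a)
  | PAnd a b => andb (psat v a) (psat v b)
  end.

Definition gamble := list (Z * pform).
Definition gplus (g1 g2 : gamble) : gamble := g1 ++ g2.
Definition gscale (a : Z) (g : gamble) : gamble :=
  map (fun bp => ((a * fst bp)%Z, snd bp)) g.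
Definition gof (phi : pform) : gamble := [(1%Z, phi)].

Definition gval (v : P -> bool) (g : gamble) : Z :=
  fold_right (fun bp acc => ((if psat v (snd bp) then fst bp else 0) + acc)%Z) 0%Z g.

(* a term a1 e(g1) + ... + ak e(gk) *)
Definition term := list (Z * gamble).

Inductive formula : Type :=
| FGe  : term -> Z -> formula
| FNot : formula -> formula
| FAnd : formula -> formula -> formula.

Definition FImp (f g : formula) : formula := FNot (FAnd f (FNot g)).

Definition tneg (t : term) : term := map (fun ag => ((- fst ag)%Z, snd ag)) t.
Definition tminus (t1 t2 : term) : term := t1 ++ tneg t2.
Definition FLe (t : term) (b : Z) : formula := FGe (tneg t) (- b)%Z.
Definition FEq (t : term) (b : Z) : formula := FAnd (FGe t b) (FLe t b).
Definition FGeT (t1 t2 : term) : formula := FGe (tminus t1 t2) 0%Z.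
Definition FEqT (t1 t2 : term) : formula := FEq (tminus t1 t2) 0%Z.
Definition FLeT (t1 t2 : term) : formula := FGeT t2 t1.
Definition e (g : gamble) : term := [(1%Z, g)].

Record prob_structure : Type := {
  W : Type;
  Fm : (W -> Prop) -> Prop;
  mu : (W -> Prop) -> R;             (* the probability measure, meaningful on F *)
  pi : W -> P -> bool;
  W_nonempty : inhabited W;
  Fm_full : Fm (fun _ => True);
  Fm_compl : forall A, Fm A -> Fm (fun w => ~ A w);
  Fm_union : forall A B, Fm A -> Fm B -> Fm (fun w => A w \/ B w);
  mu_nonneg : forall A, Fm A -> 0 <= mu A;
  mu_full : mu (fun _ => True) = 1;
  mu_add : forall A B, Fm A -> Fm B -> (forall w, A w -> B w -> False) ->
             mu (fun w => A w \/ B w) = mu A + mu B;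
  pi_meas : forall p, Fm (fun w => pi w p = true)
}.

(* all subset sums of a list of integers: the possible values of a gamble *)
Fixpoint subsums (l : list Z) : list Z :=
  match l with
  | [] => [0%Z]
  | b :: l' => subsums l' ++ map (fun s => (b + s)%Z) (subsums l')
  end.

(* ordinary expectation of the simple random variable [[g]]_M:
   sum over its (finitely many) possible values x of x * mu([[g]] = x) *)
Definition expect (M : prob_structure) (g : gamble) : R :=
  fold_right Rplus 0
    (map (fun x => IZR x * mu M (fun w => gval (pi M w) g = x))
         (nodup Z.eq_dec (subsums (map fst g)))).

Definition term_val (M : prob_structure) (t : term) : R :=
  fold_right Rplus 0 (map (fun ag => IZR (fst ag) * expect M (snd ag)) t).

Fixpoint holds (M : prob_structure) (f : formula) : Prop :=
  match f with
  | FGe t b => term_val M t >= IZR b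
  | FNot g => ~ holds M g
  | FAnd g h => holds M g /\ holds M h
  end.

Definition valid_prob (f : formula) : Prop := forall M : prob_structure, holds M f.

Inductive tform : Type :=
| TVar : nat -> tform
| TNot : tform -> tform
| TAnd : tform -> tform -> tform.

Fixpoint teval (v : nat -> bool) (t : tform) : bool :=
  match t with
  | TVar n => v n
  | TNot a => negb (teval v a)
  | TAnd a b => andb (teval v a) (teval v b)
  end.

Definition tautology (t : tform) : Prop := forall v, teval v t = true.

Fixpoint tsubst (s : nat -> formula) (t : tform) : formula :=
  match t with
  | TVar n => s n
  | TNot a => FNot (tsubst s a)
  | TAnd a b => FAnd (tsubst s a) (tsubst s b)
  end.

Inductive lform : Type :=
| LGe  : list (Z * nat) -> Z -> lform
| LNot : lform -> lform
| LAnd : lform -> lform -> lform.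

Fixpoint leval (x : nat -> R) (l : lform) : Prop :=
  match l with
  | LGe cs c => fold_right Rplus 0 (map (fun cn => IZR (fst cn) * x (snd cn)) cs) >= IZR c
  | LNot a => ~ leval x a
  | LAnd a b => leval x a /\ leval x b
  end.

Definition lvalid (l : lform) : Prop := forall x : nat -> R, leval x l.

Fixpoint lsubst (s : nat -> gamble) (l : lform) : formula :=
  match l with
  | LGe cs c => FGe (map (fun cn => (fst cn, s (snd cn))) cs) c
  | LNot a => FNot (lsubst s a)
  | LAnd a b => FAnd (lsubst s a) (lsubst s b)
  end.

Definition valid_gamble_le (g1 g2 : gamble) : Prop :=
  forall (Wr : Type) (pr : Wr -> P -> bool) (w : Wr),
    (gval (pr w) g1 <= gval (pr w) g2)%Z.

Inductive provable : formula -> Prop :=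
| ax_taut : forall t s, tautology t -> provable (tsubst s t)
| ax_ineq : forall l s, lvalid l -> provable (lsubst s l)
| ax_E1 : forall g1 g2, provable (FEqT (e (gplus g1 g2)) (e g1 ++ e g2))
| ax_E2 : forall (a : Z) phi, provable (FEqT (e [(a, phi)]) [(a, gof phi)])
| ax_E3 : provable (FEq (e (gof pfalse)) 0%Z)
| ax_E4 : provable (FEq (e (gof ptrue)) 1%Z)
| ax_E5 : forall g1 g2, valid_gamble_le g1 g2 -> provable (FLeT (e g1) (e g2))
| rule_MP : forall f g, provable f -> provable (FImp f g) -> provable g.

End Logic.

(* Soundness: only finitely many formulas matter, and on the atoms of the Boolean algebra they
   generate every gamble is constant, so an expectation is the sum over atoms of the value of the
   gamble times the probability of the atom; E1-E5 then hold atom by atom.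
   Completeness: for valid [f], let [Ax] conjoin the instances of E1, E2, E4, E5 saying that
   [e(true) = 1], that atoms have nonnegative expectation, and that each gamble of [f] (and [true])
   has the expectation of its expansion over atoms, expanded linearly.  Then [Ax => f] is an
   instance of Ineq: a real assignment to the terms [e(g)] satisfying [Ax] is the expectation
   function of the finite structure whose worlds are the atoms [d], weighted by the value
   assigned to [e(d)], and [f] holds there by validity. *)

From Stdlib Require Import Reals ZArith List Lia Lra Bool.
From Stdlib Require Import Classical ClassicalEpsilon FunctionalExtensionality PropExtensionality.
Import ListNotations.
Open Scope R_scope.

Definition sumR {A} (f : A -> R) (l : list A) : R := fold_right Rplus 0 (map f l).

Lemma sumR_nil {A} (f : A -> R) : sumR f [] = 0.
Proof. reflexivity. Qed.

Lemma sumR_cons {A} (f : A -> R) a l : sumR f (a :: l) = f a + sumR f l.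
Proof. reflexivity. Qed.

Lemma sumR_app {A} (f : A -> R) l1 l2 : sumR f (l1 ++ l2) = sumR f l1 + sumR f l2.
Proof. induction l1; simpl app; rewrite ?sumR_cons, ?sumR_nil; [lra|rewrite IHl1; lra]. Qed.

Lemma sumR_ext_in {A} (f g : A -> R) l :
  (forall x, In x l -> f x = g x) -> sumR f l = sumR g l.
Proof.
  induction l as [|a l IH]; intro H; [reflexivity|].
  rewrite !sumR_cons, H, IH; [reflexivity| |left; reflexivity].
  intros; apply H; right; assumption.
Qed.

Lemma sumR_plus {A} (f g : A -> R) l : sumR (fun x => f x + g x) l = sumR f l + sumR g l.
Proof. induction l; rewrite ?sumR_cons, ?sumR_nil; [lra|rewrite IHl; lra]. Qed.

Lemma sumR_scal {A} c (f : A -> R) l : sumR (fun x => c * f x) l = c * sumR f l.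
Proof. induction l; rewrite ?sumR_cons, ?sumR_nil; [lra|rewrite IHl; lra]. Qed.

Lemma sumR_const0 {A} (l : list A) : sumR (fun _ => 0) l = 0.
Proof. induction l; rewrite ?sumR_cons, ?sumR_nil; [reflexivity|rewrite IHl; lra]. Qed.

Lemma sumR_le {A} (f g : A -> R) l :
  (forall x, In x l -> f x <= g x) -> sumR f l <= sumR g l.
Proof.
  induction l as [|a l IH]; intro H; [rewrite !sumR_nil; lra|].
  rewrite !sumR_cons. apply Rplus_le_compat; [apply H; left; reflexivity|].
  apply IH; intros; apply H; right; assumption.
Qed.

Lemma sumR_map {A B} (f : B -> R) (h : A -> B) l : sumR f (map h l) = sumR (fun x => f (h x)) l.
Proof. unfold sumR; rewrite map_map; reflexivity. Qed.

Lemma sumR_filter {A} (q : A -> bool) (f : A -> R) l :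
  sumR f (filter q l) = sumR (fun x => if q x then f x else 0) l.
Proof.
  induction l as [|a l IH]; [reflexivity|]. simpl filter. rewrite sumR_cons, <- IH.
  destruct (q a); rewrite ?sumR_cons; lra.
Qed.

Lemma sumR_indicator_notin (X : list Z) y m : ~ In y X ->
  sumR (fun x => IZR x * (if Z.eq_dec y x then m else 0)) X = 0.
Proof.
  induction X as [|x X IH]; intro Hy; [reflexivity|]. rewrite sumR_cons, IH.
  - destruct (Z.eq_dec y x); [subst; exfalso; apply Hy; left; auto|lra].
  - intro; apply Hy; right; auto.
Qed.

Lemma sumR_indicator_in (X : list Z) y m : NoDup X -> In y X ->
  sumR (fun x => IZR x * (if Z.eq_dec y x then m else 0)) X = IZR y * m.
Proof.
  induction 1 as [|x X Hx _ IH]; intro Hy; [destruct Hy|]. rewrite sumR_cons.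
  destruct (Z.eq_dec y x) as [<-|Hne].
  - rewrite sumR_indicator_notin; auto; lra.
  - destruct Hy as [->|Hy]; [congruence|]. rewrite IH; auto; lra.
Qed.

Lemma sumR_group_by_value {A} (X : list Z) (L : list A) (f : A -> Z) (m : A -> R) :
  NoDup X -> (forall a, In a L -> In (f a) X) ->
  sumR (fun x => IZR x * sumR (fun a => if Z.eq_dec (f a) x then m a else 0) L) X
  = sumR (fun a => IZR (f a) * m a) L.
Proof.
  intros HX; induction L as [|a L IH]; intros HL.
  - rewrite sumR_nil, <- (sumR_const0 X). apply sumR_ext_in; intros; rewrite sumR_nil; lra.
  - rewrite sumR_cons, <- IH, <- sumR_indicator_in with (X := X) (m := m a);
      [|assumption|apply HL; left; reflexivity|intros; apply HL; right; assumption].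
    rewrite <- sumR_plus. apply sumR_ext_in; intros x _. rewrite sumR_cons; lra.
Qed.
Section Atoms.
Context {P : Type}.

Fixpoint count_sat (v : P -> bool) (L : list (pform P)) : nat :=
  match L with
  | [] => 0
  | d :: L' => (if psat v d then 1 else 0) + count_sat v L'
  end.

Lemma count_sat_app v L1 L2 : count_sat v (L1 ++ L2) = (count_sat v L1 + count_sat v L2)%nat.
Proof. induction L1; simpl; lia. Qed.

Lemma count_sat_map_PAnd v phi L :
  count_sat v (map (PAnd phi) L) = if psat v phi then count_sat v L else 0%nat.
Proof. induction L; simpl; destruct (psat v phi); simpl; auto; rewrite IHL; auto. Qed.

Lemma count_sat_filter_le v q L : (count_sat v (filter q L) <= count_sat v L)%nat.
Proof. induction L as [|d L IH]; simpl; [lia|destruct (q d); simpl; lia]. Qed.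

Lemma count_sat_0_psat v L d : count_sat v L = 0%nat -> In d L -> psat v d = false.
Proof.
  induction L as [|a L IH]; simpl; intros H Hd; [destruct Hd|].
  destruct (psat v a) eqn:E; [lia|]. destruct Hd as [<-|Hd]; auto.
Qed.

Lemma count_sat_1_psat v L : count_sat v L = 1%nat -> exists d, In d L /\ psat v d = true.
Proof.
  induction L as [|a L IH]; simpl; intro H; [lia|].
  destruct (psat v a) eqn:E; [exists a; auto|].
  destruct IH as [d [? ?]]; [lia|exists d; auto].
Qed.

Variable p0 : P.

Lemma psat_ptrue v : psat v (ptrue p0) = true.
Proof. simpl; destruct (v p0); reflexivity. Qed.

Fixpoint atoms (S : list (pform P)) : list (pform P) :=
  match S with
  | [] => [ptrue p0]
  | phi :: S' => map (PAnd phi) (atoms S') ++ map (PAnd (PNot phi)) (atoms S')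
  end.

Lemma count_sat_atoms v S : count_sat v (atoms S) = 1%nat.
Proof.
  induction S as [|phi S IH]; cbn [atoms count_sat].
  - rewrite psat_ptrue; reflexivity.
  - rewrite count_sat_app, !count_sat_map_PAnd, IH. simpl. destruct (psat v phi); reflexivity.
Qed.

Lemma atoms_agree S d v v' : In d (atoms S) -> psat v d = true -> psat v' d = true ->
  forall phi, In phi S -> psat v phi = psat v' phi.
Proof.
  revert d; induction S as [|a S IH]; intros d Hd Hv Hv' phi Hphi; [destruct Hphi|].
  simpl in Hd. apply in_app_or in Hd.
  destruct Hd as [Hd|Hd]; apply in_map_iff in Hd; destruct Hd as [d' [<- Hd']];
    simpl in Hv, Hv'; apply andb_true_iff in Hv, Hv';
    destruct Hv as [Ha Hv], Hv' as [Ha' Hv'];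
    (destruct Hphi as [<-|Hphi]; [|eapply IH; eauto]).
  - congruence.
  - apply negb_true_iff in Ha, Ha'. congruence.
Qed.

End Atoms.

Section GambleValues.
Context {P : Type}.

Lemma gval_app (v : P -> bool) g1 g2 : gval v (g1 ++ g2) = (gval v g1 + gval v g2)%Z.
Proof. induction g1; simpl; [reflexivity|rewrite IHg1; lia]. Qed.

Lemma gval_agree (v v' : P -> bool) g :
  (forall phi, In phi (map snd g) -> psat v phi = psat v' phi) -> gval v g = gval v' g.
Proof.
  induction g as [|[b phi] g IH]; simpl; intro H; [reflexivity|].
  rewrite H, IH by auto. reflexivity.
Qed.

Lemma gval_in_subsums (v : P -> bool) g : In (gval v g) (subsums (map fst g)).
Proof.
  induction g as [|[b phi] g IH]; simpl; [auto|]. apply in_or_app.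
  destruct (psat v phi); [right; apply (in_map (fun s => (b + s)%Z)), IH|left; exact IH].
Qed.

(* A valuation satisfying [d], or an arbitrary one if [d] is unsatisfiable. *)
Definition sat_witness (d : pform P) : P -> bool :=
  match excluded_middle_informative (exists v, psat v d = true) with
  | left H => proj1_sig (constructive_indefinite_description _ H)
  | right _ => fun _ => true
  end.

Lemma sat_witness_spec d v : psat v d = true -> psat (sat_witness d) d = true.
Proof.
  intro H. unfold sat_witness. destruct excluded_middle_informative as [H'|H'].
  - exact (proj2_sig (constructive_indefinite_description _ H')).
  - exfalso; eauto.
Qed.

Definition atom_val (g : gamble P) (d : pform P) : Z := gval (sat_witness d) g.

Lemma gval_count_sat_0 (v : P -> bool) (h : pform P -> Z) L :
  count_sat v L = 0%nat -> gval v (map (fun d => (h d, d)) L) = 0%Z.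
Proof.
  induction L as [|d L IH]; simpl; intro H; [reflexivity|].
  destruct (psat v d); simpl in H; [lia|]. rewrite IH; auto.
Qed.

Lemma gval_partition (v : P -> bool) (h : pform P -> Z) L y : count_sat v L = 1%nat ->
  (forall d, In d L -> psat v d = true -> h d = y) -> gval v (map (fun d => (h d, d)) L) = y.
Proof.
  induction L as [|d L IH]; simpl; intros H1 H2; [lia|].
  destruct (psat v d) eqn:E; simpl in H1.
  - rewrite gval_count_sat_0, H2 by auto with zarith. lia.
  - apply IH; auto.
Qed.

Definition atom_expansion (D : list (pform P)) (g : gamble P) : gamble P :=
  map (fun d => (atom_val g d, d)) D.

Variable p0 : P.

Lemma gval_ptrue (v : P -> bool) : gval v (gof (ptrue p0)) = 1%Z.
Proof. simpl; destruct (v p0); reflexivity. Qed.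

Lemma gval_atom S g d v : incl (map snd g) S -> In d (atoms p0 S) ->
  psat v d = true -> gval v g = atom_val g d.
Proof.
  intros HS Hd Hv. apply gval_agree. intros phi Hphi.
  eapply atoms_agree; eauto using sat_witness_spec.
Qed.

Lemma gval_atom_expansion S g v : incl (map snd g) S ->
  gval v (atom_expansion (atoms p0 S) g) = gval v g.
Proof.
  intro HS. apply gval_partition; [apply count_sat_atoms|].
  intros d Hd Hv. symmetry. eapply gval_atom; eauto.
Qed.

End GambleValues.

Section Measure.
Context {P : Type}.
Variable M : prob_structure P.

Definition truth_set (d : pform P) : W M -> Prop := fun w => psat (pi M w) d = true.

Lemma mu_ext (A B : W M -> Prop) : (forall w, A w <-> B w) -> mu M A = mu M B.
Proof.
  intro H. f_equal. apply functional_extensionality; intro w.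
  apply propositional_extensionality; auto.
Qed.

Lemma Fm_ext (A B : W M -> Prop) : Fm M A -> (forall w, A w <-> B w) -> Fm M B.
Proof.
  intros HA H. replace B with A; auto. apply functional_extensionality; intro w.
  apply propositional_extensionality; auto.
Qed.

Lemma Fm_empty : Fm M (fun _ => False).
Proof. eapply Fm_ext; [apply Fm_compl, Fm_full|]. intro w; tauto. Qed.

Lemma mu_empty : mu M (fun _ => False) = 0.
Proof.
  pose proof (mu_add M _ _ (Fm_full M) Fm_empty (fun w _ h => h)) as H.
  rewrite (mu_ext _ (fun _ => True)) in H; [lra|tauto].
Qed.

Lemma Fm_inter A B : Fm M A -> Fm M B -> Fm M (fun w => A w /\ B w).
Proof.
  intros HA HB.
  eapply Fm_ext; [apply (Fm_compl M _ (Fm_union M _ _ (Fm_compl M _ HA) (Fm_compl M _ HB)))|].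
  intro w; destruct (classic (A w)), (classic (B w)); tauto.
Qed.

Lemma Fm_truth_set d : Fm M (truth_set d).
Proof.
  unfold truth_set; induction d as [p|d IH|d1 IH1 d2 IH2]; simpl.
  - apply pi_meas.
  - eapply Fm_ext; [apply Fm_compl, IH|].
    intro w; cbv beta; simpl; destruct (psat (pi M w) d); simpl; intuition congruence.
  - eapply Fm_ext; [apply Fm_inter; [exact IH1|exact IH2]|]. intro w; cbv beta; simpl; rewrite andb_true_iff; tauto.
Qed.

Lemma Fm_exists_in L : Fm M (fun w => exists d, In d L /\ truth_set d w).
Proof.
  induction L as [|d L IH].
  - eapply Fm_ext; [apply Fm_empty|]. intro w; split; [tauto|intros [? [[] _]]].
  - eapply Fm_ext; [apply (Fm_union M _ _ (Fm_truth_set d) IH)|]. intro w; split.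
    + intros [Hd|[d' [Hin Hd']]]; [exists d; simpl; auto|exists d'; simpl; auto].
    + intros [d' [[<-|Hin] Hd']]; [left; auto|right; eauto].
Qed.

Lemma mu_union_disjoint L : (forall w, count_sat (pi M w) L <= 1)%nat ->
  mu M (fun w => exists d, In d L /\ truth_set d w) = sumR (fun d => mu M (truth_set d)) L.
Proof.
  induction L as [|d L IH]; intro Hc.
  - rewrite sumR_nil, <- mu_empty. apply mu_ext. intro w; split; [intros [? [[] _]]|tauto].
  - rewrite sumR_cons, <- IH by (intro w; specialize (Hc w); simpl in Hc; lia).
    rewrite <- mu_add; [|apply Fm_truth_set|apply Fm_exists_in|].
    + apply mu_ext. intro w; split.
      * intros [d' [[<-|Hin] Hd']]; [left; auto|right; eauto].
      * intros [Hd|[d' [Hin Hd']]]; [exists d; simpl; auto|exists d'; simpl; auto].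
    + intros w Hd [d' [Hin Hd']]. specialize (Hc w); simpl in Hc. unfold truth_set in *.
      rewrite Hd in Hc. rewrite (count_sat_0_psat (pi M w) L d') in Hd'; [discriminate|lia|auto].
Qed.

End Measure.

Section Expectation.
Context {P : Type}.
(* [p0] is needed only to build [atoms]; it does not occur in the statements. *)
Variables (p0 : P) (M : prob_structure P).

Lemma expect_atoms S g : incl (map snd g) S ->
  expect M g = sumR (fun d => IZR (atom_val g d) * mu M (truth_set M d)) (atoms p0 S).
Proof.
  intro HS. set (D := atoms p0 S). set (X := nodup Z.eq_dec (subsums (map fst g))).
  change (expect M g) with (sumR (fun x => IZR x * mu M (fun w => gval (pi M w) g = x)) X).
  rewrite <- (sumR_group_by_value X D (atom_val g));
    [|apply NoDup_nodup|intros d _; apply nodup_In, gval_in_subsums].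
  apply sumR_ext_in; intros x _. f_equal.
  set (q := fun d => if Z.eq_dec (atom_val g d) x then true else false).
  transitivity (sumR (fun d => mu M (truth_set M d)) (filter q D)).
  2: { rewrite sumR_filter. apply sumR_ext_in; intros d _. unfold q. destruct Z.eq_dec; reflexivity. }
  rewrite <- mu_union_disjoint.
  2: { intro w. pose proof (count_sat_filter_le (pi M w) q D) as H.
       unfold D in H; rewrite count_sat_atoms in H. exact H. }
  apply mu_ext; intro w. unfold truth_set. split.
  - intro Hx. destruct (count_sat_1_psat _ _ (count_sat_atoms p0 (pi M w) S)) as [d [Hd Hw]].
    exists d; split; [|exact Hw]. apply filter_In; split; [exact Hd|].
    unfold q; rewrite <- (gval_atom p0 S g d (pi M w)), Hx by assumption.
    destruct Z.eq_dec; congruence.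
  - intros [d [Hd Hw]]. apply filter_In in Hd as [Hd Hq].
    rewrite (gval_atom p0 S g d (pi M w)) by assumption.
    unfold q in Hq; destruct Z.eq_dec; congruence.
Qed.

Lemma sum_mu_atoms S : sumR (fun d => mu M (truth_set M d)) (atoms p0 S) = 1.
Proof.
  rewrite <- mu_union_disjoint by (intro w; rewrite count_sat_atoms; lia).
  rewrite <- (mu_full M). apply mu_ext; intro w; split; [tauto|intros _].
  exact (count_sat_1_psat _ _ (count_sat_atoms p0 (pi M w) S)).
Qed.

Lemma expect_gplus g1 g2 : expect M (gplus g1 g2) = expect M g1 + expect M g2.
Proof.
  set (S := map snd (g1 ++ g2)). unfold gplus.
  rewrite (expect_atoms S (g1 ++ g2)), (expect_atoms S g1), (expect_atoms S g2);
    unfold S; rewrite ?map_app; auto using incl_appl, incl_appr, incl_refl.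
  rewrite <- sumR_plus. apply sumR_ext_in; intros d _.
  unfold atom_val; rewrite gval_app, plus_IZR; lra.
Qed.

Lemma expect_scale a phi : expect M [(a, phi)] = IZR a * expect M (gof phi).
Proof.
  rewrite (expect_atoms [phi] [(a, phi)]), (expect_atoms [phi] (gof phi)) by apply incl_refl.
  rewrite <- sumR_scal. apply sumR_ext_in; intros d _. unfold atom_val; simpl.
  destruct psat; rewrite ?Z.add_0_r; simpl; lra.
Qed.

Lemma expect_pfalse : expect M (gof (pfalse p0)) = 0.
Proof.
  rewrite (expect_atoms [pfalse p0]) by apply incl_refl.
  rewrite <- (sumR_const0 (atoms p0 [pfalse p0])). apply sumR_ext_in; intros d _.
  unfold atom_val; simpl. destruct (sat_witness d p0); simpl; lra.
Qed.

Lemma expect_ptrue : expect M (gof (ptrue p0)) = 1.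
Proof.
  rewrite (expect_atoms [ptrue p0]) by apply incl_refl.
  rewrite <- (sum_mu_atoms [ptrue p0]). apply sumR_ext_in; intros d _.
  unfold atom_val; simpl. destruct (sat_witness d p0); simpl; lra.
Qed.

Lemma expect_monotone g1 g2 : valid_gamble_le g1 g2 -> expect M g1 <= expect M g2.
Proof.
  intro Hle. set (S := map snd (g1 ++ g2)).
  rewrite (expect_atoms S g1), (expect_atoms S g2);
    unfold S; rewrite ?map_app; auto using incl_appl, incl_appr, incl_refl.
  apply sumR_le; intros d _. apply Rmult_le_compat_r.
  - apply mu_nonneg, Fm_truth_set.
  - apply IZR_le, (Hle unit (fun _ => sat_witness d) tt).
Qed.

End Expectation.

Section LinearSemantics.
Context {P : Type}.

(* Formulas read with each [e(g)] replaced by an arbitrary real [I g]: the semantics of Ineq. *)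
Definition term_eval (I : gamble P -> R) (t : term P) : R :=
  sumR (fun ag => IZR (fst ag) * I (snd ag)) t.

Fixpoint sat (I : gamble P -> R) (f : formula P) : Prop :=
  match f with
  | FGe t b => term_eval I t >= IZR b
  | FNot g => ~ sat I g
  | FAnd g h => sat I g /\ sat I h
  end.

Lemma holds_iff_sat (M : prob_structure P) f : holds M f <-> sat (expect M) f.
Proof. induction f; simpl; [tauto|rewrite IHf; tauto|rewrite IHf1, IHf2; tauto]. Qed.

Lemma term_eval_app I t1 t2 : term_eval I (t1 ++ t2) = term_eval I t1 + term_eval I t2.
Proof. apply sumR_app. Qed.

Lemma term_eval_tneg I t : term_eval I (tneg t) = - term_eval I t.
Proof.
  unfold term_eval, tneg. rewrite sumR_map.
  rewrite (sumR_ext_in _ (fun x => -1 * (IZR (fst x) * I (snd x)))); [rewrite sumR_scal; lra|].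
  intros; simpl; rewrite opp_IZR; lra.
Qed.

Lemma term_eval_single I a g : term_eval I [(a, g)] = IZR a * I g.
Proof. unfold term_eval; rewrite sumR_cons, sumR_nil; simpl; lra. Qed.

Lemma term_eval_e I g : term_eval I (e g) = I g.
Proof. unfold e; rewrite term_eval_single; lra. Qed.

Lemma sat_FEqT I t1 t2 : sat I (FEqT t1 t2) <-> term_eval I t1 = term_eval I t2.
Proof.
  unfold FEqT, FEq, FLe, tminus; simpl. rewrite term_eval_tneg, !term_eval_app, !term_eval_tneg.
  simpl; lra.
Qed.

Lemma sat_FLeT I t1 t2 : sat I (FLeT t1 t2) <-> term_eval I t1 <= term_eval I t2.
Proof. unfold FLeT, FGeT, tminus; simpl. rewrite term_eval_app, term_eval_tneg; simpl; lra. Qed.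

Lemma sat_FEq I t b : sat I (FEq t b) <-> term_eval I t = IZR b.
Proof. unfold FEq, FLe; simpl. rewrite term_eval_tneg, opp_IZR; lra. Qed.

Lemma sat_tsubst I s t :
  sat I (tsubst s t) <->
  teval (fun n => if excluded_middle_informative (sat I (s n)) then true else false) t = true.
Proof.
  induction t as [n|t IH|t1 IH1 t2 IH2]; simpl.
  - destruct excluded_middle_informative; intuition congruence.
  - rewrite negb_true_iff, IH. destruct teval; intuition congruence.
  - rewrite andb_true_iff, IH1, IH2; tauto.
Qed.

Lemma sat_lsubst I s l : sat I (lsubst s l) <-> leval (fun n => I (s n)) l.
Proof.
  induction l as [cs c|l IH|l1 IH1 l2 IH2]; simpl.
  - unfold term_eval, sumR. rewrite map_map. tauto.
  - rewrite IH; tauto.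
  - rewrite IH1, IH2; tauto.
Qed.

Fixpoint gambles (f : formula P) : list (gamble P) :=
  match f with
  | FGe t _ => map snd t
  | FNot g => gambles g
  | FAnd g h => gambles g ++ gambles h
  end.

Lemma sat_ext I1 I2 f : (forall g, In g (gambles f) -> I1 g = I2 g) -> (sat I1 f <-> sat I2 f).
Proof.
  induction f as [t b|f IH|f1 IH1 f2 IH2]; simpl; intro H.
  - unfold term_eval. rewrite (sumR_ext_in _ (fun ag => IZR (fst ag) * I2 (snd ag))); [tauto|].
    intros [a g] Hin; simpl; rewrite H; [reflexivity|apply (in_map snd _ _ Hin)].
  - rewrite IH; tauto.
  - rewrite IH1, IH2; [tauto| |]; intros; apply H, in_or_app; auto.
Qed.

End LinearSemantics.

Theorem soundness {P} (p0 : P) f : provable p0 f -> valid_prob f.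
Proof.
  induction 1 as [t s Ht|l s Hl|g1 g2|a phi| | |g1 g2 Hle|f g _ IHf _ IHfg];
    intro M; apply holds_iff_sat.
  - apply sat_tsubst, Ht.
  - apply sat_lsubst, Hl.
  - apply sat_FEqT. rewrite term_eval_app, !term_eval_e. apply (expect_gplus p0).
  - apply sat_FEqT. rewrite term_eval_e, term_eval_single. apply (expect_scale p0).
  - apply sat_FEq. rewrite term_eval_e. apply expect_pfalse.
  - apply sat_FEq. rewrite term_eval_e. apply expect_ptrue.
  - apply sat_FLeT. rewrite !term_eval_e. apply (expect_monotone p0), Hle.
  - specialize (IHf M); specialize (IHfg M).
    rewrite holds_iff_sat in IHf, IHfg. simpl in IHfg. tauto.
Qed.

Section Completeness.
Context {P : Type}.
Variable p0 : P.

Definition gamble_eq_dec (g1 g2 : gamble P) : {g1 = g2} + {g1 <> g2} :=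
  excluded_middle_informative _.

Fixpoint index_of (G : list (gamble P)) (g : gamble P) : nat :=
  match G with
  | [] => 0
  | h :: G' => if gamble_eq_dec h g then 0 else S (index_of G' g)
  end.

Lemma nth_index_of G g : In g G -> nth (index_of G g) G [] = g.
Proof.
  induction G as [|h G IH]; simpl; intro Hg; [destruct Hg|].
  destruct (gamble_eq_dec h g); [assumption|destruct Hg; [congruence|auto]].
Qed.

Fixpoint abstract (G : list (gamble P)) (f : formula P) : lform :=
  match f with
  | FGe t b => LGe (map (fun ag => (fst ag, index_of G (snd ag))) t) b
  | FNot g => LNot (abstract G g)
  | FAnd g h => LAnd (abstract G g) (abstract G h)
  end.

Lemma lsubst_abstract G f : incl (gambles f) G -> lsubst (fun n => nth n G []) (abstract G f) = f.
Proof.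
  induction f as [t b|f IH|f1 IH1 f2 IH2]; simpl; intro HG.
  - f_equal. rewrite map_map. transitivity (map (fun ag => ag) t); [|apply map_id].
    apply map_ext_in.
    intros [a g] Hin; simpl. rewrite nth_index_of; [reflexivity|apply HG, (in_map snd _ _ Hin)].
  - f_equal; auto.
  - f_equal; [apply IH1|apply IH2]; intros g Hg; apply HG, in_or_app; auto.
Qed.

Lemma leval_abstract G f x : leval x (abstract G f) <-> sat (fun g => x (index_of G g)) f.
Proof.
  induction f as [t b|f IH|f1 IH1 f2 IH2]; simpl.
  - unfold term_eval, sumR. rewrite map_map. tauto.
  - rewrite IH; tauto.
  - rewrite IH1, IH2; tauto.
Qed.

Lemma provable_of_sat_all f : (forall I, sat I f) -> provable p0 f.
Proof.
  intro Hf. rewrite <- (lsubst_abstract (gambles f) f (incl_refl _)).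
  apply ax_ineq. intro x. apply leval_abstract, Hf.
Qed.

Definition FConj (l : list (formula P)) : formula P := fold_right (@FAnd P) (FGe [] 0%Z) l.

Lemma sat_FConj I l : sat I (FConj l) <-> Forall (sat I) l.
Proof.
  induction l as [|f l IH]; simpl.
  - unfold term_eval; rewrite sumR_nil. split; [constructor|lra].
  - rewrite Forall_cons_iff, IH; tauto.
Qed.

Lemma provable_FAnd f g : provable p0 f -> provable p0 g -> provable p0 (FAnd f g).
Proof.
  intros Hf Hg.
  set (t := TNot (TAnd (TVar 0) (TNot (TNot (TAnd (TVar 1) (TNot (TAnd (TVar 0) (TVar 1)))))))).
  assert (Ht : tautology t) by (intro v; simpl; destruct (v 0%nat), (v 1%nat); reflexivity).
  pose proof (ax_taut p0 (fun n => match n with 0%nat => f | _ => g end) Ht) as Hfg.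
  exact (rule_MP Hg (rule_MP Hf Hfg)).
Qed.

Lemma provable_FConj l : Forall (provable p0) l -> provable p0 (FConj l).
Proof.
  induction 1; simpl; [|apply provable_FAnd; assumption].
  apply provable_of_sat_all; intro I. apply (sat_FConj I []); constructor.
Qed.

Fixpoint split_instances (g : gamble P) : list (formula P) :=
  match g with
  | [] => []
  | bp :: g' => FEqT (e (gplus [bp] g')) (e [bp] ++ e g') :: split_instances g'
  end.

Definition scale_instance (bp : Z * pform P) : formula P := FEqT (e [bp]) [(fst bp, gof (snd bp))].

Definition linearity_instances (g : gamble P) : list (formula P) :=
  split_instances g ++ map scale_instance g.

Lemma linearity_instances_provable g : Forall (provable p0) (linearity_instances g).
Proof.
  apply Forall_app; split.
  - induction g as [|bp g IH]; constructor; [apply ax_E1|exact IH].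
  - apply Forall_map, Forall_forall. intros [b phi] _. apply ax_E2.
Qed.

Lemma sat_linearity_instances I g : I [] = 0 -> Forall (sat I) (linearity_instances g) ->
  I g = sumR (fun bp => IZR (fst bp) * I (gof (snd bp))) g.
Proof.
  intros Hnil H. apply Forall_app in H as [Hsplit Hscale]. apply Forall_map in Hscale.
  induction g as [|bp g IH]; [exact Hnil|].
  cbn [split_instances] in Hsplit. apply Forall_cons_iff in Hsplit as [Hbp Hsplit].
  apply Forall_cons_iff in Hscale as [Hs Hscale].
  apply sat_FEqT in Hbp, Hs. rewrite term_eval_app, !term_eval_e in Hbp.
  rewrite term_eval_e, term_eval_single in Hs.
  rewrite sumR_cons, <- IH by assumption. change (bp :: g) with (gplus [bp] g). lra.
Qed.

Section WeightedStructure.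
Variables (D : list (pform P)) (wt : pform P -> R).
Hypotheses (wt_nonneg : forall d, In d D -> 0 <= wt d) (wt_sum : sumR wt D = 1).

Definition weighted_measure (A : pform P -> Prop) : R :=
  sumR (fun d => if excluded_middle_informative (A d) then wt d else 0) D.

Lemma weighted_measure_nonneg A : 0 <= weighted_measure A.
Proof.
  rewrite <- (sumR_const0 D). apply sumR_le; intros d Hd.
  destruct excluded_middle_informative; [apply wt_nonneg, Hd|lra].
Qed.

Lemma weighted_measure_full : weighted_measure (fun _ => True) = 1.
Proof.
  rewrite <- wt_sum. apply sumR_ext_in; intros d _.
  destruct excluded_middle_informative as [_|n]; [reflexivity|exfalso; exact (n Logic.I)].
Qed.

Lemma weighted_measure_add A B : (forall d, A d -> B d -> False) ->
  weighted_measure (fun d => A d \/ B d) = weighted_measure A + weighted_measure B.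
Proof.
  intro Hdisj. unfold weighted_measure. rewrite <- sumR_plus. apply sumR_ext_in; intros d _.
  destruct (excluded_middle_informative (A d \/ B d)), (excluded_middle_informative (A d)),
    (excluded_middle_informative (B d)); try lra; try tauto.
  exfalso; eauto.
Qed.

Definition weighted_structure : prob_structure P :=
  @Build_prob_structure P (pform P) (fun _ => True) weighted_measure sat_witness
    (inhabits (ptrue p0)) Logic.I (fun _ _ => Logic.I) (fun _ _ _ _ => Logic.I)
    (fun A _ => weighted_measure_nonneg A) weighted_measure_full
    (fun A B _ _ => weighted_measure_add A B) (fun _ => Logic.I).

Lemma expect_weighted_structure g :
  expect weighted_structure g = sumR (fun d => IZR (atom_val g d) * wt d) D.
Proof.
  set (X := nodup Z.eq_dec (subsums (map fst g))).
  change (expect weighted_structure g) with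
    (sumR (fun x => IZR x * weighted_measure (fun d => atom_val g d = x)) X).
  rewrite <- (sumR_group_by_value X D (atom_val g));
    [|apply NoDup_nodup|intros d _; apply nodup_In, gval_in_subsums].
  apply sumR_ext_in; intros x _. f_equal. apply sumR_ext_in; intros d _.
  destruct excluded_middle_informative, Z.eq_dec; tauto.
Qed.

End WeightedStructure.

Definition expansion_instances (D : list (pform P)) (g : gamble P) : list (formula P) :=
  FLeT (e g) (e (atom_expansion D g)) :: FLeT (e (atom_expansion D g)) (e g) ::
  linearity_instances (atom_expansion D g).

Lemma sat_expansion_instances I D g : I [] = 0 -> Forall (sat I) (expansion_instances D g) ->
  I g = sumR (fun d => IZR (atom_val g d) * I (gof d)) D.
Proof.
  intros Hnil H. apply Forall_cons_iff in H as [Hle1 H]. apply Forall_cons_iff in H as [Hle2 H].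
  apply sat_FLeT in Hle1, Hle2. rewrite !term_eval_e in Hle1, Hle2.
  rewrite (sat_linearity_instances I (atom_expansion D g) Hnil H) in Hle1, Hle2.
  unfold atom_expansion in Hle1, Hle2. rewrite sumR_map in Hle1, Hle2. simpl in Hle1, Hle2. lra.
Qed.

(* Instances of E1, E2, E4, E5 forcing any assignment [I] satisfying them to agree, on the
   gambles [Gs], with the expectation for the weights [I (gof d)] of the atoms [d] in [D]. *)
Definition reduction_axioms (D : list (pform P)) (Gs : list (gamble P)) : list (formula P) :=
  FEqT (e (gplus [] [])) (e [] ++ e []) :: FEq (e (gof (ptrue p0))) 1 ::
  map (fun d => FLeT (e []) (e (gof d))) D ++ flat_map (expansion_instances D) Gs.

Lemma reduction_axioms_provable S Gs : (forall g, In g Gs -> incl (map snd g) S) ->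
  Forall (provable p0) (reduction_axioms (atoms p0 S) Gs).
Proof.
  intro HS. repeat apply Forall_cons; [apply ax_E1|apply ax_E4|]. apply Forall_app; split.
  - apply Forall_map, Forall_forall; intros d _. apply ax_E5.
    intros Wr pr w; simpl. destruct psat; lia.
  - apply Forall_flat_map, Forall_forall; intros g Hg.
    repeat apply Forall_cons; [apply ax_E5..|apply linearity_instances_provable];
      intros Wr pr w; rewrite gval_atom_expansion by auto; lia.
Qed.

(* [true] is included so that the atom weights sum to [e(true) = 1]. *)
Definition reduction_gambles (f : formula P) : list (gamble P) := gof (ptrue p0) :: gambles f.

Definition reduction_formulas (f : formula P) : list (pform P) :=
  flat_map (map snd) (reduction_gambles f).

Lemma reduction_gambles_incl f g : In g (reduction_gambles f) -> incl (map snd g) (reduction_formulas f).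
Proof. intros Hg phi Hphi. apply in_flat_map; eauto. Qed.

Lemma sat_of_reduction_axioms f I : valid_prob f ->
  Forall (sat I) (reduction_axioms (atoms p0 (reduction_formulas f)) (reduction_gambles f)) ->
  sat I f.
Proof.
  intros Hf H. set (D := atoms p0 (reduction_formulas f)) in H.
  apply Forall_cons_iff in H as [Hnil H]. apply Forall_cons_iff in H as [Htrue H].
  apply Forall_app in H as [Hnn Hexp].
  apply sat_FEqT in Hnil. rewrite term_eval_app, !term_eval_e in Hnil.
  assert (I_nil : I [] = 0) by (simpl in Hnil; lra).
  assert (I_nonneg : forall d, In d D -> 0 <= I (gof d)).
  { intros d Hd. rewrite Forall_map, Forall_forall in Hnn. specialize (Hnn d Hd).
    apply sat_FLeT in Hnn. rewrite !term_eval_e in Hnn. lra. }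
  assert (I_decomp : forall g, In g (reduction_gambles f) ->
            I g = sumR (fun d => IZR (atom_val g d) * I (gof d)) D).
  { intros g Hg. rewrite Forall_flat_map, Forall_forall in Hexp.
    apply sat_expansion_instances; auto. }
  assert (I_sum : sumR (fun d => I (gof d)) D = 1).
  { apply sat_FEq in Htrue. rewrite term_eval_e in Htrue.
    rewrite <- Htrue, (I_decomp _ (or_introl eq_refl)). apply sumR_ext_in; intros d _.
    unfold atom_val; rewrite gval_ptrue; lra. }
  set (M := weighted_structure D (fun d => I (gof d)) I_nonneg I_sum).
  apply (sat_ext (expect M)); [|apply holds_iff_sat, Hf].
  intros g Hg. unfold M; rewrite expect_weighted_structure, I_decomp; [reflexivity|right; exact Hg].
Qed.

Theorem completeness f : valid_prob f -> provable p0 f.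
Proof.
  intro Hf.
  set (Ax := reduction_axioms (atoms p0 (reduction_formulas f)) (reduction_gambles f)).
  apply (rule_MP (f := FConj Ax)).
  - apply provable_FConj, reduction_axioms_provable, reduction_gambles_incl.
  - apply provable_of_sat_all; intros I [HAx Hnf]. apply Hnf.
    apply sat_of_reduction_axioms; [exact Hf|apply sat_FConj, HAx].
Qed.

End Completeness.

Theorem theorem5p1 (P : Type) (p0 : P) (f : formula P) :
  provable p0 f <-> valid_prob f.
Proof. split; [apply soundness|apply completeness]. Qed.
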